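(* Let $\mathfrak{A}$ be an architecture, $\Sigma$ a finite alphabet and $k\ge1$. There is a deterministic bottom-up tree automaton $\mathcal{A}^{k\text{-stw}}_{\mathsf{acyclic}}$ with $2^{\mathcal{O}(k^2)}$ states which accepts all binary trees $\tau$ such that $\tau$ is a $k$-STT and $G_\tau$ is acyclic.
   Context: Architecture $\mathfrak{A}=(\mathsf{Procs},\mathsf{DS},\mathsf{Writer},\mathsf{Reader})$ with finite sets of processes and data structures. Edge labels are $\Gamma=\{\to\}\cup\mathsf{DS}$ and vertex labels are pairs in $\Sigma\times\mathsf{Procs}$. For $k\ge1$, $k$-STTs are $\tau::=(i,a,p)\mid\mathsf{Add}^\gamma_{i,j}\tau\mid\mathsf{Forget}_i\tau\mid\tau\oplus\tau$ with $a\in\Sigma,p\in\mathsf{Procs},\gamma\in\Gamma,i,j\in[k]$. Semantics $[\![\tau]\!]=(G_\tau,\chi_\tau)$, $G_\tau$ a labelled graph and $\chi_\tau:[k]\to V$ partial injective: $(i,a,p)$ is one vertex labelled $(a,p)$ colored $i$; $\mathsf{Add}^\gamma_{i,j}$ adds the edge $(\chi(i),\chi(j))$ with label $\gamma$ if $i,j\in\mathrm{dom}(\chi)$ (nothing otherwise); $\mathsf{Forget}_i$ removes $i$ from $\mathrm{dom}(\chi)$; $\tau_1\oplus\tau_2$ is the disjoint union, defined (i.e. the term is a legal $k$-STT) only if the color domains are disjoint. Terms are regarded as binary trees over the alphabet $\{\oplus,(i,a,p),\mathsf{Add}^\gamma_{i,j},\mathsf{Forget}_i\}$ (leaves atomic,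 unary nodes $\mathsf{Add}/\mathsf{Forget}$, binary nodes $\oplus$). $G_\tau$ is acyclic if the union of all its edge relations has no cycle. The size of a tree automaton is its number of states. *)

From mathcomp Require Import all_boot.
Set Implicit Arguments. Unset Strict Implicit. Unset Printing Implicit Defensive.

Record architecture := Architecture {
  Procs : finType;
  DS : finType;
  Writer : DS -> Procs;
  Reader : DS -> Procs }.

(* Edge labels Gamma = {->} u DS : None encodes the process order ->. *)
Definition Gamma (A : architecture) : finType := option (DS A).

(* Binary trees over the alphabet {oplus, (i,a,p), Add^g_{i,j}, Forget_i},
   colors i, j in [k] = 'I_k.  These are all the trees the automaton reads;
   the k-STTs are those satisfying [stt_legal]. *)
Inductive stt_tree (A : architecture) (Sigma : finType) (k : nat) : Type :=
| STLeaf : 'I_k -> Sigma -> Procs A -> stt_tree A Sigma k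
| STAdd : Gamma A -> 'I_k -> 'I_k -> stt_tree A Sigma k -> stt_tree A Sigma k
| STForget : 'I_k -> stt_tree A Sigma k -> stt_tree A Sigma k
| STPlus : stt_tree A Sigma k -> stt_tree A Sigma k -> stt_tree A Sigma k.

Section Semantics.
Variables (A : architecture) (Sigma : finType) (k : nat).
Local Notation tree := (stt_tree A Sigma k).

(* Semantics [[tau]] = (G_tau, chi_tau): vertices are 0 .. nv-1. *)
Fixpoint stt_nv (t : tree) : nat :=
  match t with
  | STLeaf _ _ _ => 1
  | STAdd _ _ _ t' => stt_nv t'
  | STForget _ t' => stt_nv t'
  | STPlus t1 t2 => stt_nv t1 + stt_nv t2
  end.

Fixpoint stt_vlab (t : tree) : seq (Sigma * Procs A) :=
  match t with
  | STLeaf _ a p => [:: (a, p)]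
  | STAdd _ _ _ t' => stt_vlab t'
  | STForget _ t' => stt_vlab t'
  | STPlus t1 t2 => stt_vlab t1 ++ stt_vlab t2
  end.

Fixpoint stt_chi (t : tree) : 'I_k -> option nat :=
  match t with
  | STLeaf i _ _ => fun c => if c == i then Some 0 else None
  | STAdd _ _ _ t' => stt_chi t'
  | STForget i t' => fun c => if c == i then None else stt_chi t' c
  | STPlus t1 t2 => fun c =>
      match stt_chi t1 c with
      | Some u => Some u
      | None => omap (addn (stt_nv t1)) (stt_chi t2 c)
      end
  end.

Fixpoint stt_edges (t : tree) : seq (nat * Gamma A * nat) :=
  match t with
  | STLeaf _ _ _ => [::]
  | STAdd g i j t' =>
      match stt_chi t' i, stt_chi t' j with
      | Some u, Some v => (u, g, v) :: stt_edges t'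
      | _, _ => stt_edges t'
      end
  | STForget _ t' => stt_edges t'
  | STPlus t1 t2 =>
      stt_edges t1 ++
      [seq (x.1.1 + stt_nv t1, x.1.2, x.2 + stt_nv t1) | x <- stt_edges t2]
  end.

(* legality: tau1 (+) tau2 is defined only if color domains are disjoint *)
Fixpoint stt_legal (t : tree) : bool :=
  match t with
  | STLeaf _ _ _ => true
  | STAdd _ _ _ t' => stt_legal t'
  | STForget _ t' => stt_legal t'
  | STPlus t1 t2 =>
      [&& stt_legal t1, stt_legal t2 &
          [forall c : 'I_k, (stt_chi t1 c == None) || (stt_chi t2 c == None)]]
  end.

Definition stt_edge_rel (t : tree) : rel nat :=
  fun u v => has (fun x => (x.1.1 == u) && (x.2 == v)) (stt_edges t).

Definition stt_acyclic (t : tree) : Prop :=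
  ~ exists (u : nat) (p : seq nat),
      [/\ p != [::], path (stt_edge_rel t) u p & last u p = u].

End Semantics.

Record dbta (A : architecture) (Sigma : finType) (k : nat) (Q : finType) :=
  DBTA {
  d_leaf : 'I_k -> Sigma -> Procs A -> Q;
  d_add : Gamma A -> 'I_k -> 'I_k -> Q -> Q;
  d_forget : 'I_k -> Q -> Q;
  d_plus : Q -> Q -> Q;
  d_final : pred Q }.

Fixpoint dbta_run A Sigma k Q (M : dbta A Sigma k Q) (t : stt_tree A Sigma k)
  : Q :=
  match t with
  | STLeaf i a p => d_leaf M i a p
  | STAdd g i j t' => d_add M g i j (dbta_run M t')
  | STForget i t' => d_forget M i (dbta_run M t')
  | STPlus t1 t2 => d_plus M (dbta_run M t1) (dbta_run M t2)
  end.

Definition dbta_accepts A Sigma k Q (M : dbta A Sigma k Q) t : bool :=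
  d_final M (dbta_run M t).

From mathcomp Require Import all_boot zify.
From Stdlib Require Import Relation_Operators Operators_Properties.
Set Implicit Arguments. Unset Strict Implicit.

(* On a legal term whose graph is acyclic, the state is the reachability relation of
   G_tau between colors: (a, b) belongs to it iff chi(a) and chi(b) are defined and
   chi(a) reaches chi(b), reflexively, so that the diagonal records the color domain.
   Nothing else about the term is observable by later operations: Add_{i,j} closes a
   cycle iff chi(j) already reaches chi(i), and otherwise new paths are exactly those
   through the new edge; Forget_i drops color i; a legal sum has disjoint color
   domains and no edges between its parts, so its relation is the union.  Illegal or
   cyclic terms fall into a sink, which gives 2^(k^2) + 1 states. *)

Definition rtc (T : Type) (e : rel T) : T -> T -> Prop :=
  clos_refl_trans T (fun x y => e x y).

Lemma rtc_map (T T' : Type) (f : T -> T') (e : rel T) (e' : rel T') :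
  (forall x y, e x y -> e' (f x) (f y)) ->
  forall x y, rtc e x y -> rtc e' (f x) (f y).
Proof.
move=> fe x y; elim=> [{}x {}y /fe|{}x|{}x {}y z _ rxy _ ryz].
- exact: rt_step.
- exact: rt_refl.
- exact: rt_trans rxy ryz.
Qed.

Section ReflexiveTransitiveClosure.
Variable T : eqType.
Implicit Types (e : rel T) (x y z : T).

Lemma rtc_sub e (e' : rel T) : subrel e e' -> forall x y, rtc e x y -> rtc e' x y.
Proof. exact: (@rtc_map T T id). Qed.

Lemma eq_rtc e (e' : rel T) : e =2 e' -> forall x y, rtc e x y <-> rtc e' x y.
Proof. by move=> ee' x y; split; apply: rtc_sub => a b; rewrite ee'. Qed.

Lemma rtcP e x y : rtc e x y <-> exists2 p, path e x p & last x p = y.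
Proof.
split.
  elim/clos_refl_trans_ind_left=> [|{}y z _ [p pxp <-] eyz]; first by exists [::].
  by exists (rcons p z); rewrite ?rcons_path ?pxp ?eyz ?last_rcons.
case=> p + <-; elim: p x => [|z p IHp] x /=; first by move=> _; apply: rt_refl.
by case/andP=> exz /IHp; apply: rt_trans; apply: rt_step.
Qed.

Definition rel_acyclic e := forall x y, e x y -> ~ rtc e y x.

Lemma rel_acyclicP e :
  ~ (exists u p, [/\ p != [::], path e u p & last u p = u]) <-> rel_acyclic e.
Proof.
split=> [nocycle x y exy /rtcP[p yp lastp] | ac [u [p [p_nil]]]].
  by apply: nocycle; exists x, (y :: p); rewrite /= exy yp.
case: p p_nil => [|y p] //= _ /andP[euy yp] lastp.
by apply: (ac u y euy); apply/rtcP; exists p.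
Qed.

Lemma rel_acyclic_sub e (e' : rel T) : subrel e e' -> rel_acyclic e' -> rel_acyclic e.
Proof. by move=> ee' ac x y /ee' exy /(rtc_sub ee'); apply: ac. Qed.

Lemma eq_rel_acyclic e (e' : rel T) : e =2 e' -> rel_acyclic e <-> rel_acyclic e'.
Proof. by move=> ee'; split; apply: rel_acyclic_sub => x y; rewrite ee'. Qed.

End ReflexiveTransitiveClosure.

Section AddEdge.
Variables (T : eqType) (e : rel T) (u v : T).

Definition add_edge : rel T := fun x y => ((x == u) && (y == v)) || e x y.

Lemma rtc_add_edge x y : rtc add_edge x y <-> rtc e x y \/ rtc e x u /\ rtc e v y.
Proof.
have e_sub : subrel e add_edge by move=> a b eab; rewrite /add_edge eab orbT.
split.
  elim/clos_refl_trans_ind_left=> [|{}y z _ IHy]; first by left; apply: rt_refl.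
  case/orP=> [/andP[/eqP eyu /eqP ->]|eyz].
    by subst y; right; split; [case: IHy => [|[]] | apply: rt_refl].
  case: IHy => [rxy|[rxu rvy]]; [left|right; split=> //];
    exact: rt_trans (rt_step _ _ _ _ eyz).
case=> [|[rxu rvy]]; first exact: rtc_sub.
apply: rt_trans (rtc_sub e_sub rxu) (rt_trans _ _ _ _ _ _ (rtc_sub e_sub rvy)).
by apply: rt_step; rewrite /add_edge !eqxx.
Qed.

Lemma rel_acyclic_add_edge : rel_acyclic add_edge <-> rel_acyclic e /\ ~ rtc e v u.
Proof.
split=> [ac | [ac nrvu] x y].
  split=> [|rvu].
    by apply: rel_acyclic_sub ac => a b eab; rewrite /add_edge eab orbT.
  by apply: (ac u v); [rewrite /add_edge !eqxx | apply/rtc_add_edge; left].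
case/orP=> [/andP[/eqP -> /eqP ->]|exy] /rtc_add_edge; first by case=> [|[]].
case=> [/(ac x y exy) //|[ryu rvx]]; apply: nrvu.
exact: rt_trans rvx (rt_trans _ _ _ _ _ (rt_step _ _ _ _ exy) ryu).
Qed.

End AddEdge.

Section DisjointUnion.
Variables (n : nat) (e1 e2 : rel nat).

Definition disjoint_union : rel nat :=
  fun x y => e1 x y || [&& n <= x, n <= y & e2 (x - n) (y - n)].

Lemma disjoint_union_l : subrel e1 disjoint_union.
Proof. by move=> x y e1xy; rewrite /disjoint_union e1xy. Qed.

Lemma disjoint_union_r x y : e2 x y -> disjoint_union (n + x) (n + y).
Proof. by move=> e2xy; rewrite /disjoint_union !leq_addr !addKn e2xy orbT. Qed.

Hypothesis e1_below : forall x y, e1 x y -> x < n /\ y < n.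

Lemma rtc_disjoint_union_low x y :
  x < n -> rtc disjoint_union x y -> rtc e1 x y /\ y < n.
Proof.
move=> x_lt_n; elim/clos_refl_trans_ind_left=> [|{}y z _ [rxy y_lt_n]].
  by split=> //; apply: rt_refl.
case/orP=> [/[dup] /e1_below[_ z_lt_n] e1yz|/and3P[]]; last by rewrite leqNgt y_lt_n.
by split=> //; apply: rt_trans rxy (rt_step _ _ _ _ e1yz).
Qed.

Lemma rtc_disjoint_union_high x y :
  rtc disjoint_union (n + x) y -> exists2 y', y = n + y' & rtc e2 x y'.
Proof.
elim/clos_refl_trans_ind_left=> [|{}y z _ [y' -> rxy']].
  by exists x => //; apply: rt_refl.
case/orP=> [/e1_below[]|/and3P[_ n_le_z]]; first by rewrite ltnNge leq_addr.
rewrite addKn => e2yz; exists (z - n); first by rewrite subnKC.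
exact: rt_trans rxy' (rt_step _ _ _ _ e2yz).
Qed.

Lemma rel_acyclic_disjoint_union :
  rel_acyclic disjoint_union <-> rel_acyclic e1 /\ rel_acyclic e2.
Proof.
split=> [ac | [ac1 ac2] x y].
  split=> [x y e1xy r1yx | x y e2xy r2yx].
    exact: (ac x y (disjoint_union_l e1xy) (rtc_sub disjoint_union_l r1yx)).
  apply: (ac _ _ (disjoint_union_r e2xy)).
  exact: (rtc_map (f := addn n) (@disjoint_union_r) r2yx).
case/orP=> [e1xy|/and3P[n_le_x n_le_y e2xy]] ryx.
  have [_ y_lt_n] := e1_below e1xy.
  by case: (rtc_disjoint_union_low y_lt_n ryx) => /(ac1 _ _ e1xy).
move: ryx; rewrite -(subnKC n_le_y) => /rtc_disjoint_union_high[x' x_eq].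
by move: x_eq e2xy; rewrite -{1}(subnKC n_le_x) => /addnI ->; apply: ac2.
Qed.

End DisjointUnion.

Section TermGraphs.
Variables (A : architecture) (Sigma : finType) (k : nat).
Local Notation tree := (stt_tree A Sigma k).
Implicit Types (t : tree) (a b c i j : 'I_k).

Lemma stt_chi_bound t c x : stt_chi t c = Some x -> x < stt_nv t.
Proof.
elim: t c x => [i ? ?|_ _ _ t IHt|i t IHt|t1 IH1 t2 IH2] c x /=.
- by case: (c == i) => // -[<-].
- exact: IHt.
- by case: (c == i) => //; apply: IHt.
- case E1: (stt_chi t1 c) => [x1|]; first by move=> [<-]; rewrite ltn_addr ?(IH1 c).
  by case E2: (stt_chi t2 c) => [x2|] //= [<-]; rewrite ltn_add2l (IH2 c).
Qed.

Lemma stt_edges_bound t x g y :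
  (x, g, y) \in stt_edges t -> x < stt_nv t /\ y < stt_nv t.
Proof.
elim: t x g y => [? ? ?|g' i j t IHt|_ t IHt|t1 IH1 t2 IH2] x g y //=.
- case Ei: (stt_chi t i) => [u|]; case Ej: (stt_chi t j) => [v|]; try exact: IHt.
  rewrite in_cons => /orP[/eqP[-> _ ->]|]; last exact: IHt.
  by split; [apply: stt_chi_bound Ei | apply: stt_chi_bound Ej].
- exact: IHt.
- rewrite mem_cat => /orP[/IH1[x_lt y_lt]|/mapP[[[x2 g2] y2] /IH2[x_lt y_lt] [-> _ ->]]].
    by rewrite !ltn_addr.
  by rewrite ![_ + stt_nv t1]addnC !ltn_add2l.
Qed.

Lemma stt_edge_rel_bound t x y : stt_edge_rel t x y -> x < stt_nv t /\ y < stt_nv t.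
Proof. by case/hasP=> [[[x' g] y'] /stt_edges_bound + /andP[/eqP <- /eqP <-]]. Qed.

Lemma stt_edge_rel_sub_add g i j t :
  subrel (stt_edge_rel t) (stt_edge_rel (STAdd g i j t)).
Proof.
rewrite /stt_edge_rel /= => x y exy.
by case: (stt_chi t i) => [u|] //; case: (stt_chi t j) => [v|] //=; rewrite exy orbT.
Qed.

Lemma stt_edge_rel_add g i j t u v :
  stt_chi t i = Some u -> stt_chi t j = Some v ->
  stt_edge_rel (STAdd g i j t) =2 add_edge (stt_edge_rel t) u v.
Proof.
rewrite /stt_edge_rel /add_edge /= => -> -> x y /=.
by rewrite ![_ == x]eq_sym ![_ == y]eq_sym.
Qed.

Lemma stt_edge_rel_add_uncolored g i j t :
  ~~ ((stt_chi t i != None) && (stt_chi t j != None)) ->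
  stt_edge_rel (STAdd g i j t) =2 stt_edge_rel t.
Proof. by rewrite /stt_edge_rel /=; case: (stt_chi t i); case: (stt_chi t j). Qed.

Lemma stt_edge_rel_plus t1 t2 :
  stt_edge_rel (STPlus t1 t2) =2
  disjoint_union (stt_nv t1) (stt_edge_rel t1) (stt_edge_rel t2).
Proof.
move=> x y; rewrite /stt_edge_rel /disjoint_union /= has_cat has_map; congr orb.
apply/hasP/and3P=> [[[[x' g] y'] xgy /andP[/eqP <- /eqP <-]]|[n_le_x n_le_y]].
  by rewrite !leq_addl !addnK; split=> //; apply/hasP; exists (x', g, y'); rewrite ?eqxx.
case/hasP=> [[[x' g] y'] xgy /= /andP[/eqP x_eq /eqP y_eq]]; exists (x', g, y') => //=.
by rewrite x_eq y_eq !subnK ?eqxx.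
Qed.

Definition color_reach t a b := exists x y,
  [/\ stt_chi t a = Some x, stt_chi t b = Some y & rtc (stt_edge_rel t) x y].

Lemma color_reach_diag t c : color_reach t c c <-> stt_chi t c != None.
Proof.
split=> [[x [y [-> //]]]|]; case E: (stt_chi t c) => [x|] // _.
by exists x, x; split=> //; apply: rt_refl.
Qed.

Lemma color_reach_add g i j t u v a b :
  stt_chi t i = Some u -> stt_chi t j = Some v ->
  color_reach (STAdd g i j t) a b <->
  color_reach t a b \/ color_reach t a i /\ color_reach t j b.
Proof.
move=> Ei Ej; have addE := stt_edge_rel_add g Ei Ej.
split=> [[x [y [Ea Eb /(eq_rtc addE)/rtc_add_edge]]]|].
  case=> [rxy|[rxu rvy]]; [left; exists x, y|right; split; [exists x, u|exists v, y]];
    by [].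
case=> [[x [y [Ea Eb rxy]]]|[[x [u' [Ea Ei' rxu]]] [v' [y [Ej' Eb rvy]]]]].
  by exists x, y; split=> //; apply: rtc_sub rxy; apply: stt_edge_rel_sub_add.
move: Ei' Ej' rxu rvy; rewrite Ei Ej => -[<-] [<-] rxu rvy.
by exists x, y; split=> //; apply/(eq_rtc addE)/rtc_add_edge; right.
Qed.

Lemma color_reach_add_uncolored g i j t a b :
  ~~ ((stt_chi t i != None) && (stt_chi t j != None)) ->
  color_reach (STAdd g i j t) a b <-> color_reach t a b.
Proof.
move=> /(stt_edge_rel_add_uncolored g) same.
by split=> -[x [y [Ea Eb /(eq_rtc same) rxy]]]; exists x, y.
Qed.

Lemma color_reach_forget i t a b :
  color_reach (STForget i t) a b <-> [/\ a != i, b != i & color_reach t a b].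
Proof.
rewrite /color_reach /=.
split=> [[x [y []]]|[/negbTE-> /negbTE-> [x [y [Ea Eb rxy]]]]]; last by exists x, y.
by case: eqP => // _; case: eqP => // _ Ea Eb rxy; split=> //; exists x, y.
Qed.

Lemma stt_chi_plus_l t1 t2 c x :
  stt_chi t1 c = Some x -> stt_chi (STPlus t1 t2) c = Some x.
Proof. by move=> /= ->. Qed.

Lemma stt_chi_plus_r t1 t2 c :
  stt_chi t1 c = None ->
  stt_chi (STPlus t1 t2) c = omap (addn (stt_nv t1)) (stt_chi t2 c).
Proof. by move=> /= ->. Qed.

Lemma color_reach_plus t1 t2 a b :
  [forall c, (stt_chi t1 c == None) || (stt_chi t2 c == None)] ->
  color_reach (STPlus t1 t2) a b <-> color_reach t1 a b \/ color_reach t2 a b.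
Proof.
move=> /forallP disj; rewrite /color_reach.
have bound := @stt_edge_rel_bound t1.
have plusE := stt_edge_rel_plus t1 t2.
split=> [[x [y [Ea Eb /(eq_rtc plusE) rxy]]]|].
  case E1a: (stt_chi t1 a) => [x1|].
    move: Ea; rewrite (stt_chi_plus_l _ E1a) => -[x1x]; subst x1.
    have [r1xy y_lt] := rtc_disjoint_union_low bound (stt_chi_bound E1a) rxy.
    left; exists x, y; split=> //.
    case E1b: (stt_chi t1 b) => [y1|]; first by move: Eb; rewrite (stt_chi_plus_l _ E1b).
    move: Eb y_lt; rewrite (stt_chi_plus_r _ E1b).
    by case: (stt_chi t2 b) => //= y2 [<-]; rewrite ltnNge leq_addr.
  move: Ea; rewrite (stt_chi_plus_r _ E1a); case E2a: (stt_chi t2 a) => [x2|] //= [x_eq].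
  move: rxy; rewrite -x_eq => /(rtc_disjoint_union_high bound)[y2 y_eq r2].
  right; exists x2, y2; split=> //.
  case E1b: (stt_chi t1 b) => [y1|].
    move: Eb (stt_chi_bound E1b); rewrite (stt_chi_plus_l _ E1b) => -[->].
    by rewrite y_eq ltnNge leq_addr.
  by move: Eb; rewrite (stt_chi_plus_r _ E1b) y_eq; case: (stt_chi t2 b) => //= ? [/addnI ->].
case=> [[x [y [Ea Eb rxy]]]|[x [y [Ea Eb rxy]]]].
  exists x, y; rewrite (stt_chi_plus_l _ Ea) (stt_chi_plus_l _ Eb); split=> //.
  by apply/(eq_rtc plusE); apply: rtc_sub rxy; apply: disjoint_union_l.
have uncolored1 c z : stt_chi t2 c = Some z -> stt_chi t1 c = None.
  by move: (disj c) => /orP[/eqP|/eqP-> //].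
exists (stt_nv t1 + x), (stt_nv t1 + y).
rewrite !stt_chi_plus_r ?Ea ?Eb ?(uncolored1 _ _ Ea) ?(uncolored1 _ _ Eb) //.
split=> //; apply/(eq_rtc plusE).
exact: (rtc_map (f := addn (stt_nv t1)) (@disjoint_union_r _ _ _) rxy).
Qed.

Lemma rel_acyclic_stt_plus t1 t2 :
  rel_acyclic (stt_edge_rel (STPlus t1 t2)) <->
  rel_acyclic (stt_edge_rel t1) /\ rel_acyclic (stt_edge_rel t2).
Proof.
rewrite -(rel_acyclic_disjoint_union _ (@stt_edge_rel_bound t1)).
exact: eq_rel_acyclic (stt_edge_rel_plus t1 t2).
Qed.

End TermGraphs.

Section Automaton.
Variables (A : architecture) (Sigma : finType) (k : nat).
Local Notation tree := (stt_tree A Sigma k).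

Definition acyclic_state := option {set 'I_k * 'I_k}.

Definition add_tr (i j : 'I_k) (s : acyclic_state) : acyclic_state :=
  if s is Some R then
    if ((i, i) \in R) && ((j, j) \in R) then
      if (j, i) \in R then None
      else Some (R :|: [set ab : 'I_k * 'I_k | ((ab.1, i) \in R) && ((j, ab.2) \in R)])
    else Some R
  else None.

Definition forget_tr (i : 'I_k) : acyclic_state -> acyclic_state :=
  omap (fun R : {set 'I_k * 'I_k} => [set ab in R | (ab.1 != i) && (ab.2 != i)]).

Definition plus_tr (s1 s2 : acyclic_state) : acyclic_state :=
  if (s1, s2) is (Some R1, Some R2) then
    if [forall c, ((c, c) \notin R1) || ((c, c) \notin R2)] then Some (R1 :|: R2)
    else None
  else None.

Definition acyclic_dbta : dbta A Sigma k acyclic_state :=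
  DBTA (fun i _ _ => Some [set (i, i)]) (fun _ => add_tr) forget_tr plus_tr isSome.

Definition run_spec (t : tree) (s : acyclic_state) : Prop :=
  if s is Some R then
    [/\ stt_legal t, rel_acyclic (stt_edge_rel t) &
        forall a b, (a, b) \in R <-> color_reach t a b]
  else ~ (stt_legal t /\ rel_acyclic (stt_edge_rel t)).

Lemma mem_diag (t : tree) (R : {set 'I_k * 'I_k}) c :
  (forall a b, (a, b) \in R <-> color_reach t a b) ->
  ((c, c) \in R) = (stt_chi t c != None).
Proof.
by move=> reachR; apply/idP/idP=> [/reachR/color_reach_diag|/color_reach_diag/reachR].
Qed.

Lemma run_spec_leaf i a p : run_spec (STLeaf i a p) (Some [set (i, i)]).
Proof.
split=> // a' b'; rewrite inE xpair_eqE /color_reach /=.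
split=> [/andP[/eqP-> /eqP->]|[x [y []]]]; last by do 2!case: eqP.
by exists 0, 0; rewrite !eqxx; split=> //; apply: rt_refl.
Qed.

Lemma run_spec_add g i j t s :
  run_spec t s -> run_spec (STAdd g i j t) (add_tr i j s).
Proof.
case: s => [R [legal_t ac reachR]|not_ok] /=; last first.
  move=> [legal_t ac]; apply: not_ok; split=> //.
  by apply: rel_acyclic_sub ac; apply: stt_edge_rel_sub_add.
rewrite !(mem_diag _ reachR).
case: ifPn => [/andP[]|uncolored]; last first.
  split=> // [|a b]; last by rewrite reachR color_reach_add_uncolored.
  exact/(eq_rel_acyclic (stt_edge_rel_add_uncolored g uncolored)).
case Ei: (stt_chi t i) => [u|] // _; case Ej: (stt_chi t j) => [v|] // _.
have addE := stt_edge_rel_add g Ei Ej.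
have reach_vu : (j, i) \in R <-> rtc (stt_edge_rel t) v u.
  rewrite reachR; split=> [[x [y [Ej' Ei' rxy]]]|rvu]; last by exists v, u.
  by move: Ej' Ei' rxy; rewrite Ei Ej => -[<-] [<-].
case: ifPn => [/reach_vu rvu [_]|/negP not_reach].
  by move/(eq_rel_acyclic addE)/rel_acyclic_add_edge=> [_]; apply.
split=> // [|a b].
  apply/(eq_rel_acyclic addE)/rel_acyclic_add_edge; split=> // rvu.
  by apply/not_reach/reach_vu.
rewrite (color_reach_add _ _ _ Ei Ej) !inE -!reachR /=.
by split=> [/orP[]|[->|[-> ->]]]; rewrite ?orbT //; [left|move/andP; right].
Qed.

Lemma run_spec_forget i t s :
  run_spec t s -> run_spec (STForget i t) (forget_tr i s).
Proof.
case: s => [R [legal_t ac reachR]|not_ok] //=; split=> // a b.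
rewrite inE color_reach_forget /=.
by split=> [/and3P[/reachR rab ai bi]|[ai bi /reachR rab]]; [split | rewrite rab ai bi].
Qed.

Lemma run_spec_plus t1 t2 s1 s2 :
  run_spec t1 s1 -> run_spec t2 s2 ->
  run_spec (STPlus t1 t2) (plus_tr s1 s2).
Proof.
have plus_ok : stt_legal (STPlus t1 t2) /\ rel_acyclic (stt_edge_rel (STPlus t1 t2)) ->
    (stt_legal t1 /\ rel_acyclic (stt_edge_rel t1)) /\
    (stt_legal t2 /\ rel_acyclic (stt_edge_rel t2)).
  by move=> [/and3P[legal1 legal2 _] /rel_acyclic_stt_plus[ac1 ac2]].
case: s1 => [R1 [legal1 ac1 reach1]|not_ok1]; last by move=> _ /plus_ok[].
case: s2 => [R2 [legal2 ac2 reach2]|not_ok2]; last by move=> /plus_ok[].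
rewrite /plus_tr.
have -> : [forall c, ((c, c) \notin R1) || ((c, c) \notin R2)] =
          [forall c, (stt_chi t1 c == None) || (stt_chi t2 c == None)].
  by apply: eq_forallb => c; rewrite (mem_diag _ reach1) (mem_diag _ reach2) !negbK.
case: ifPn => [disj|not_disj]; last first.
  by move=> [/and3P[_ _ disj] _]; rewrite disj in not_disj.
split=> [|//|a b]; first by rewrite /= legal1 legal2.
  exact/rel_acyclic_stt_plus.
by rewrite (color_reach_plus _ _ disj) inE -reach1 -reach2; split=> [/orP|/orP].
Qed.

Lemma run_spec_run t : run_spec t (dbta_run acyclic_dbta t).
Proof.
elim: t => [i a p|g i j t|i t|t1 IH1 t2 IH2] /=.
- exact: run_spec_leaf.
- exact: run_spec_add.
- exact: run_spec_forget.
- exact: run_spec_plus.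
Qed.

End Automaton.

Lemma card_acyclic_state k : #|{: acyclic_state k}| = (2 ^ (k ^ 2)).+1.
Proof.
by rewrite card_option -cardsT -powersetT card_powerset cardsT card_prod card_ord.
Qed.

Theorem mainTheorem9 :
  forall (A : architecture) (Sigma : finType),
  exists c : nat,
  forall k : nat, 0 < k ->
  exists (Q : finType) (M : dbta A Sigma k Q),
    #|Q| <= 2 ^ (c * k ^ 2) /\
    forall t : stt_tree A Sigma k,
      dbta_accepts M t <-> (stt_legal t /\ stt_acyclic t).
Proof.
move=> A Sigma; exists 2 => k k_gt0.
exists (acyclic_state k), (acyclic_dbta A Sigma k); split.
  have : 2 ^ 1 <= 2 ^ (k ^ 2) by rewrite leq_exp2l // expn_gt0 k_gt0.
  rewrite card_acyclic_state mul2n -addnn expnD; nia.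
move=> t; have := run_spec_run t; rewrite /dbta_accepts.
case: (dbta_run _ t) => [R [legal_t ac _]|not_ok] /=.
  by split=> // _; split=> //; apply/rel_acyclicP.
by split=> // -[legal_t /rel_acyclicP ac]; case: not_ok.
Qed.
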